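(* Let $k\ge2$, $\sigma_i=\frac{i(k-i)}2$ for $i=0,\dots,k$, and let $M=(m_{i,j})_{1\le i,j\le k}$ be the symmetric tridiagonal matrix with $m_{i,i-1}=\sigma_{i-1}$, $m_{i,i}=-(\sigma_{i-1}+\sigma_i)$, $m_{i,i+1}=\sigma_i$ and $m_{i,j}=0$ if $|i-j|\ge2$. Then $M$ is diagonalizable with real eigenvalues $-m_i=-\frac{i(i-1)}2$, $i=1,\dots,k$, and an eigenvector for the eigenvalue $-m_1=0$ is $(1,\dots,1)^t$. *)

From HB Require Import structures.
From mathcomp Require Import all_boot all_order all_algebra.
Set Implicit Arguments. Unset Strict Implicit. Unset Printing Implicit Defensive.
Import Order.TTheory GRing.Theory Num.Theory.
Local Open Scope ring_scope.

(* sigma_i = i (k - i) / 2, for 0 <= i <= k (nat subtraction harmless there) *)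
Definition sigma (R : realFieldType) (k i : nat) : R := (i * (k - i))%:R / 2%:R.

Definition mval (R : realFieldType) (i : nat) : R := (i * i.-1)%:R / 2%:R.

(* Paper indices are 1-based: the paper's
   entry m_{r,s} is (Mk k) (r-1) (s-1).  For 0-based row i (paper row r=i+1):
   m_{r,r-1} = sigma_{r-1} = sigma_i, m_{r,r} = -(sigma_i + sigma_{i+1}),
   m_{r,r+1} = sigma_r = sigma_{i+1}, zero elsewhere. *)
Definition Mk (R : realFieldType) (k : nat) : 'M[R]_k :=
  \matrix_(i < k, j < k)
    if (j.+1 == i :> nat) then sigma R k i
    else if (j == i :> nat) then - (sigma R k i + sigma R k i.+1)
    else if (j == i.+1 :> nat) then sigma R k i.+1
    else 0.

From HB Require Import structures.
From mathcomp Require Import all_boot all_order all_algebra.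
From mathcomp Require Import ring lra zify.
Import Order.TTheory GRing.Theory Num.Theory.
Local Open Scope ring_scope.

(* With V the lower unitriangular Pascal matrix V_{i,d} = C(i,d), one has
   M V = V T, where T is upper bidiagonal with diagonal entries -m_1, ..., -m_k
   and superdiagonal entries sigma_1, ..., sigma_(k-1).  So M is similar to a
   triangular matrix whose diagonal entries are pairwise distinct, hence it is
   diagonalizable with exactly these eigenvalues.  The vector of ones lies in
   the kernel because every row of M sums to zero. *)

Lemma sum_ord_eq_nat (V : nmodType) (k a : nat) (F : nat -> V) :
  \sum_(j < k) (if (j : nat) == a then F j else 0) = if (a < k)%N then F a else 0.
Proof.
elim: k => [|k IHk]; first by rewrite big_ord0.
rewrite big_ord_recr /= IHk ltnS.
by case: (ltngtP a k) => [||->]; rewrite ?addr0 ?add0r.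
Qed.

Lemma char_poly_trmx (R : comNzRingType) (n : nat) (A : 'M[R]_n) :
  char_poly A^T = char_poly A.
Proof.
rewrite /char_poly -det_tr; congr (\det _); apply/matrixP => i j; rewrite !mxE.
by case: (eqVneq i j) => [->|ne] //=; rewrite eq_sym (negbTE ne).
Qed.

Lemma binomial_three_term_identity (R : numFieldType) (i d k b c c' : R) :
  i * b = (i - (d + 1)) * c -> (d + 1) * c = (i - d) * c' ->
  i * (k - i) / 2 * b - (i * (k - i) / 2 + (i + 1) * (k - (i + 1)) / 2) * c
  + (i + 1) * (k - (i + 1)) / 2 * (c + c')
  = c * - ((d + 2) * (d + 1) / 2) + c' * ((d + 1) * (k - (d + 1)) / 2).
Proof.
move=> down left; apply/eqP; rewrite -subr_eq0.
have -> : i * (k - i) / 2 * b - (i * (k - i) / 2 + (i + 1) * (k - (i + 1)) / 2) * c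
  + (i + 1) * (k - (i + 1)) / 2 * (c + c')
  - (c * - ((d + 2) * (d + 1) / 2) + c' * ((d + 1) * (k - (d + 1)) / 2))
  = ((k - i) * (i * b - (i - (d + 1)) * c)
     + (d + 2 - k + i) * ((d + 1) * c - (i - d) * c')) / 2 by field.
by rewrite down left !subrr !mulr0 addr0 mul0r.
Qed.

Section TridiagonalMatrix.

Variables (R : realFieldType) (k : nat).

Lemma sigma0 : sigma R k 0 = 0.
Proof. by rewrite /sigma mul0n mul0r. Qed.

Lemma sigma_id : sigma R k k = 0.
Proof. by rewrite /sigma subnn muln0 mul0r. Qed.

Lemma Mk_row_sum (i : 'I_k) (f : nat -> R) :
  \sum_(j < k) Mk R k i j * f j =
  sigma R k i * f i.-1 - (sigma R k i + sigma R k i.+1) * f i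
  + sigma R k i.+1 * f i.+1.
Proof.
have Mk_entry (j : 'I_k) : Mk R k i j * f j =
    (if (j : nat) == i.-1 then sigma R k i * f j else 0)
  + (if (j : nat) == i then - (sigma R k i + sigma R k i.+1) * f j else 0)
  + (if (j : nat) == i.+1 then sigma R k i.+1 * f j else 0).
  rewrite mxE; case: (nat_of_ord i) => [|i'] /=.
    rewrite sigma0 mul0r if_same add0r.
    by case: (nat_of_ord j) => [|[|j']] /=; rewrite ?mul0r ?addr0 ?add0r.
  rewrite eqSS.
  case: (nat_of_ord j == i') /eqP => ?; case: (nat_of_ord j == i'.+1) /eqP => ?;
    case: (nat_of_ord j == i'.+2) /eqP => ?; try lia;
    by rewrite ?mul0r ?addr0 ?add0r.
rewrite (eq_bigr _ (fun j _ => Mk_entry j)) !big_split /=.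
rewrite (sum_ord_eq_nat _ _ _ (fun j => sigma R k i * f j)).
rewrite (sum_ord_eq_nat _ _ _ (fun j => - (sigma R k i + sigma R k i.+1) * f j)).
rewrite (sum_ord_eq_nat _ _ _ (fun j => sigma R k i.+1 * f j)) /=.
have ltik := ltn_ord i.
rewrite (leq_ltn_trans (leq_pred _) ltik) ltik mulNr.
case: ltnP => // leki; have -> : i.+1 = k by apply/eqP; rewrite eqn_leq ltik.
by rewrite sigma_id !mul0r !addr0.
Qed.

Lemma Mk_mul_const1 : Mk R k *m (const_mx 1 : 'cV[R]_k) = 0.
Proof.
apply/matrixP => i j; rewrite [RHS]mxE mxE.
under eq_bigr => l _ do rewrite [const_mx 1 l j]mxE.
by rewrite (Mk_row_sum i (fun _ => 1)); lra.
Qed.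

Lemma Mk_binomial_row (i d : nat) : (i < k)%N -> (d < k)%N ->
  sigma R k i * 'C(i.-1, d)%:R - (sigma R k i + sigma R k i.+1) * 'C(i, d)%:R
  + sigma R k i.+1 * 'C(i.+1, d)%:R
  = 'C(i, d)%:R * - mval R d.+1 + 'C(i, d.-1)%:R * sigma R k d.
Proof.
move=> ltik; rewrite /sigma /mval; case: d => [_|d ltdk].
  by rewrite !bin0 /= muln0 mul0r; lra.
have left : d.+1%:R * 'C(i, d.+1)%:R = (i%:R - d%:R) * 'C(i, d)%:R :> R.
  rewrite -natrM mul_bin_left; case: (leqP d i) => [ledi|ltid].
    by rewrite natrM natrB.
  by rewrite bin_small // muln0 mulr0.
have down : i%:R * 'C(i.-1, d.+1)%:R = (i%:R - d.+1%:R) * 'C(i, d.+1)%:R :> R.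
  rewrite -natrM mul_bin_down; case: (leqP d.+1 i) => [ledi|ltid].
    by rewrite natrM natrB.
  by rewrite bin_small // muln0 mulr0.
rewrite binS /= !natrM !natrB ?(ltnW ltik) ?(ltnW ltdk) //.
rewrite natrD -[d.+2]addn2 -[d.+1]addn1 -[i.+1]addn1 !natrD in left down *.
exact: binomial_three_term_identity.
Qed.

Definition pascal_mx : 'M[R]_k := \matrix_(i < k, d < k) 'C(i, d)%:R.

Definition Mk_trig_form : 'M[R]_k :=
  \matrix_(e < k, d < k)
    if e == d :> nat then - mval R d.+1
    else if e.+1 == d :> nat then sigma R k d else 0.

Lemma Mk_pascal : Mk R k *m pascal_mx = pascal_mx *m Mk_trig_form.
Proof.
apply/matrixP => i d; rewrite !mxE.
under eq_bigr => j _ do rewrite [pascal_mx j d]mxE.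
rewrite (Mk_row_sum i (fun j => 'C(j, d)%:R)) Mk_binomial_row //.
have product_entry (e : 'I_k) : pascal_mx i e * Mk_trig_form e d =
    (if (e : nat) == d then 'C(i, e)%:R * - mval R d.+1 else 0)
  + (if (e : nat) == d.-1 then 'C(i, e)%:R * sigma R k d else 0).
  rewrite !mxE; case: (nat_of_ord d) => [|d'] /=.
    rewrite sigma0 mulr0 if_same addr0.
    by case: (nat_of_ord e) => [|e'] /=; rewrite ?mulr0.
  rewrite eqSS.
  case: (nat_of_ord e == d'.+1) /eqP => ?; case: (nat_of_ord e == d') /eqP => ?;
    try lia; by rewrite ?mulr0 ?addr0 ?add0r.
rewrite (eq_bigr _ (fun e _ => product_entry e)) big_split /=.
rewrite (sum_ord_eq_nat _ _ _ (fun e => 'C(i, e)%:R * - mval R d.+1)).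
rewrite (sum_ord_eq_nat _ _ _ (fun e => 'C(i, e)%:R * sigma R k d)) /=.
have ltdk := ltn_ord d.
by rewrite ltdk (leq_ltn_trans (leq_pred _) ltdk).
Qed.

Lemma pascal_mx_unit : pascal_mx \in unitmx.
Proof.
rewrite unitmxE det_trig.
  by rewrite big1 ?unitr1 // => i _; rewrite mxE binn.
by apply/is_trig_mxP => i j ltij; rewrite mxE bin_small.
Qed.

Lemma char_poly_Mk_trig_form :
  char_poly Mk_trig_form = \prod_(i < k) ('X - (- mval R i.+1)%:P).
Proof.
rewrite -char_poly_trmx char_poly_trig.
  by apply: eq_bigr => i _; rewrite !mxE eqxx.
apply/is_trig_mxP => i j ltji; rewrite !mxE (gtn_eqF ltji).
by rewrite (gtn_eqF (ltn_trans ltji (ltnSn j))).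
Qed.

End TridiagonalMatrix.

Lemma mval_succ_inj (R : realFieldType) : injective (fun i : nat => mval R i.+1).
Proof.
move=> i j /eqP; rewrite /mval (can_eq (mulfK _)) ?invr_eq0 ?pnatr_eq0 //.
by rewrite eqr_nat => /eqP /= ij; nia.
Qed.

Theorem lemma2p5 (R : realFieldType) (k : nat) (hk : (2 <= k)%N) :
  diagonalizable (Mk R k)
  /\ (forall a : R, eigenvalue (Mk R k) a <->
        exists i : 'I_k, a = - mval R i.+1)
  /\ (Mk R k) *m (const_mx 1 : 'cV[R]_k) = 0.
Proof.
case: k hk => [//|n] _.
have Mk_conj : Mk R n.+1 = conjmx (pascal_mx R n.+1) (Mk_trig_form R n.+1).
  by rewrite conjumx ?pascal_mx_unit // -Mk_pascal mulmxK ?pascal_mx_unit.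
have minpoly_Mk : mxminpoly (Mk R n.+1) = mxminpoly (Mk_trig_form R n.+1).
  by rewrite Mk_conj mxminpoly_uconj ?pascal_mx_unit.
set rs := [seq - mval R i.+1 | i : 'I_n.+1 <- enum 'I_n.+1].
have char_poly_rs : char_poly (Mk_trig_form R n.+1) = \prod_(x <- rs) ('X - x%:P).
  by rewrite char_poly_Mk_trig_form big_map big_enum.
split; [|split; last exact: Mk_mul_const1].
- apply/diagonalizableP; exists rs.
    rewrite map_inj_uniq ?enum_uniq // => i j /oppr_inj /mval_succ_inj.
    exact: val_inj.
  by rewrite minpoly_Mk -char_poly_rs mxminpoly_dvd_char.
- move=> a; rewrite eigenvalue_root_min minpoly_Mk root_mxminpoly char_poly_rs.
  rewrite root_prod_XsubC; split; first by case/mapP => i _ ->; exists i.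
  by case=> i ->; apply/mapP; exists i; rewrite ?mem_enum.
Qed.
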